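(* Consider the unit-cost Correlated Pandora's Problem (all $c_i=1$). For any $k\le 4$ and any scenario $v$, the objective of $k$-Delayed Activation with Discrete-Time Poisson Rounding is at most $\alpha_{i^*}+(k+1)v_{i^*}$, where $i^*=\arg\min_{i\in[n]}\{\alpha_i+kv_i\}$.
   Context: Boxes $[n]$ with unit opening costs and volumes $v_i\ge 0$ (scenario $v$). Let $x_i(t)\ge 0$ ($i,t\in[n]$) satisfy $\sum_i x_i(t)\le 1$ for all $t$, and $\bar x_i(t)=\frac1t\sum_{t'=1}^{\min\{t,n\}}x_i(t')$. Discrete-Time Poisson Rounding: independently at each step $\tau=1,2,\dots$, sample box $i$ with probability $\bar x_i(\lceil\tau/2\rceil)$ (no box with the remaining probability); $\alpha_i$ is the first step at which box $i$ is sampled; all $\alpha_i$ are sampled in advance. $k$-Delayed Activation: open the boxes one per unit time step in ascending order of $\alpha_i$; stop after time step $\min_i(\alpha_i+\lfloor kv_i\rfloor)$ (or when all boxes are opened) and take the opened box of minimum volume; the objective is the number of boxes opened plus the taken volume. *)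

From HB Require Import structures.
From mathcomp Require Import all_boot all_order all_algebra.
From mathcomp Require Import reals.
Set Implicit Arguments. Unset Strict Implicit. Unset Printing Implicit Defensive.
Import Order.TTheory GRing.Theory Num.Theory.
Local Open Scope ring_scope.

Section Defs.
Variables (R : realType) (n : nat).

(* x_i(t) is only meaningful for t in [n] = {1,..,n}; other values are ignored.
   xbar_i(t) = (1/t) * sum_{t'=1}^{min(t,n)} x_i(t'). *)
Definition xbar (x : 'I_n -> nat -> R) (i : 'I_n) (t : nat) : R :=
  (t%:R)^-1 * \sum_(1 <= t' < (minn t n).+1) x i t'.

Definition ceil_half (tau : nat) : nat := (tau.+1)./2.

(* s tau = Some i : box i is sampled at step tau (tau >= 1); None : no box.
   first_sample s i a : a is the first step at which box i is sampled
   (a = None encodes alpha_i = +infinity, i.e. never sampled). *)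
Definition first_sample (s : nat -> option 'I_n) (i : 'I_n) (a : option nat) : Prop :=
  match a with
  | Some t => [/\ (1 <= t)%N, s t = Some i &
                 forall tau, (1 <= tau)%N -> (tau < t)%N -> s tau <> Some i]
  | None => forall tau, (1 <= tau)%N -> s tau <> Some i
  end.

Definition ale (a b : option nat) : bool :=
  match a, b with
  | Some x, Some y => (x <= y)%N
  | _, None => true
  | None, Some _ => false
  end.

Definition omin (a b : option nat) : option nat :=
  match a, b with
  | Some x, Some y => Some (minn x y)
  | Some x, None => Some x
  | None, b => b
  end.

(* stopping time T = min_i (alpha_i + floor(k v_i)); None = +infinity.
   floor(k v_i) is Num.truncn (k * v i) (equal to the floor since k v_i >= 0). *)
Definition stop_time (alpha : 'I_n -> option nat) (v : 'I_n -> R) (k : R)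
  : option nat :=
  foldr (fun i acc => omin (omap (fun a => a + Num.truncn (k * v i))%N (alpha i)) acc)
        None (enum 'I_n).

Definition num_opened (alpha : 'I_n -> option nat) (v : 'I_n -> R) (k : R) : nat :=
  match stop_time alpha v k with
  | Some t => minn t n
  | None => n
  end.

Definition seq_min_vol (v : 'I_n -> R) (s : seq 'I_n) : R :=
  match s with
  | [::] => 0
  | j :: r => foldr (fun j acc => Num.min (v j) acc) (v j) r
  end.

Definition kDA_objective (alpha : 'I_n -> option nat) (sigma : seq 'I_n)
  (v : 'I_n -> R) (k : R) : R :=
  let m := num_opened alpha v k in
  m%:R + seq_min_vol v (take m sigma).

End Defs.

From HB Require Import structures.
From mathcomp Require Import all_boot all_order all_algebra.
From mathcomp Require Import reals.
Import Order.TTheory GRing.Theory Num.Theory.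
Local Open Scope ring_scope.

(* Let T be the stopping time.  Since i* minimises alpha_i + k v_i, every
   alpha_j + floor(k v_j) exceeds alpha_{i*} - 1, so alpha_{i*} <= T, while
   T <= alpha_{i*} + k v_{i*} by definition.  The sampling times alpha_i are
   distinct positive integers (at most one box is sampled per step), so fewer
   than alpha_{i*} boxes precede i* in the opening order: i* is opened before
   time T.  Hence at most alpha_{i*} + k v_{i*} boxes are opened and the taken
   volume is at most v_{i*}. *)

Lemma ale_trans : transitive ale.
Proof. by move=> [y|] [x|] [z|] //=; apply: leq_trans. Qed.

Lemma first_sample_pos (n : nat) (s : nat -> option 'I_n) i t :
  first_sample s i (Some t) -> (0 < t)%N.
Proof. by case. Qed.

Lemma first_sample_inj (n : nat) (s : nat -> option 'I_n) i j t :
  first_sample s i (Some t) -> first_sample s j (Some t) -> i = j.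
Proof. by case=> _ si _ [_ sj _]; move: sj; rewrite si => -[]. Qed.

Lemma sorted_label_index_lt (T : eqType) (f : T -> option nat) (r : seq T) i a :
  uniq r -> sorted (relpre f ale) r ->
  (forall j l t, f j = Some t -> f l = Some t -> j = l) ->
  (forall j t, f j = Some t -> (0 < t)%N) ->
  i \in r -> f i = Some a -> (index i r < a)%N.
Proof.
move=> r_uniq r_sorted f_inj f_pos ir fi.
set p := index i r; set prefix := take p r.
have before j : j \in prefix -> exists2 b, f j = Some b & (0 < b < a)%N.
  move=> jp; move: r_sorted; rewrite sorted_pairwise; last exact: relpre_trans ale_trans.
  rewrite -(cat_take_drop p r) pairwise_cat => /and3P[/allrelP precede _ _].
  have /= := precede j i jp; rewrite drop_index // mem_head fi.
  case fj: (f j) => [b|] /(_ isT) //= b_le_a; exists b => //.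
  rewrite (f_pos _ _ fj) ltn_neqAle b_le_a andbT; apply: contraTN jp => /eqP b_eq_a.
  rewrite (f_inj j i b) // ?fi ?b_eq_a //.
  by apply/negP => /index_ltn; rewrite ltnn.
have prefix_uniq : uniq (map f prefix).
  rewrite map_inj_in_uniq ?take_uniq // => j l jp _ fjl.
  by have [b fj _] := before j jp; apply: (f_inj j l b fj); rewrite -fjl.
have prefix_labels : {subset map f prefix <= map Some (iota 1 a.-1)}.
  move=> _ /mapP[j jp ->]; have [b -> /andP[b_pos b_lt_a]] := before j jp.
  by rewrite map_f // mem_iota b_pos add1n prednK // (ltn_trans b_pos).
have := uniq_leq_size prefix_uniq prefix_labels.
rewrite !size_map size_iota size_takel ?index_size // => p_le.
by rewrite (leq_ltn_trans p_le) // prednK // (f_pos _ _ fi).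
Qed.

Lemma foldr_min_le (d : Order.disp_t) (T : orderType d) (x0 : T) (s : seq T) y :
  y \in x0 :: s -> (foldr Order.min x0 s <= y)%O.
Proof.
elim: s => [|z s IH]; first by rewrite inE => /eqP ->.
rewrite /= ge_min 2!inE => /or3P[/eqP y0 | /eqP -> | ys].
- by rewrite IH ?orbT // y0 mem_head.
- by rewrite lexx.
- by rewrite IH ?orbT // inE ys orbT.
Qed.

Section StoppingTime.
Context {R : realType} {n : nat}.
Context {alpha : 'I_n -> option nat} {v : 'I_n -> R} {k : R}.

Lemma seq_min_vol_le (s : seq 'I_n) j : j \in s -> seq_min_vol v s <= v j.
Proof.
case: s => [//|j0 r] js /=; rewrite -(foldr_map v) foldr_min_le //.
by rewrite -map_cons map_f.
Qed.

Lemma stop_time_le j b : alpha j = Some b ->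
  exists2 t, stop_time alpha v k = Some t & (t <= b + Num.truncn (k * v j))%N.
Proof.
move=> aj; rewrite /stop_time; elim: (enum 'I_n) (mem_enum 'I_n j) => //= i r IH.
rewrite inE => /orP[/eqP <- | jr].
  by rewrite aj; case: foldr => [t|] /=; eexists; first reflexivity; rewrite ?geq_minl.
have [t -> t_le] := IH jr; case: (alpha i) => [c|] /=; last by exists t.
by eexists; first reflexivity; rewrite geq_min t_le orbT.
Qed.

Lemma stop_time_ge L t :
  (forall j b, alpha j = Some b -> (L <= b + Num.truncn (k * v j))%N) ->
  stop_time alpha v k = Some t -> (L <= t)%N.
Proof.
move=> L_le; rewrite /stop_time; elim: (enum 'I_n) t => //= i r IH t.
case ai: (alpha i) => [c|]; case: foldr IH => [u|] //= IH [<-].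
- by rewrite leq_min (L_le _ _ ai) IH.
- exact: L_le ai.
- exact: IH.
Qed.

Hypotheses (v_ge0 : forall i, 0 <= v i) (k_ge0 : 0 <= k).

Lemma stop_time_argmin istar a :
  alpha istar = Some a ->
  (forall j b, alpha j = Some b -> a%:R + k * v istar <= b%:R + k * v j) ->
  exists2 t, stop_time alpha v k = Some t &
    (a <= t)%N /\ t%:R <= a%:R + k * v istar.
Proof.
move=> ai argmin; have [t st t_le] := stop_time_le istar a ai; exists t => //; split.
  apply: (stop_time_ge a t) st => j b aj; rewrite -ltnS -(ltr_nat R) -natr1 natrD.
  apply: le_lt_trans (le_trans _ (argmin j b aj)) _; first by rewrite lerDl mulr_ge0.
  by rewrite -addrA ltrD2l natr1 truncnS_gt.
apply: le_trans (_ : (a + Num.truncn (k * v istar))%:R <= _); first by rewrite ler_nat.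
by rewrite natrD lerD2l truncn_le mulr_ge0.
Qed.

End StoppingTime.

Theorem lemmaA2 (R : realType) (n : nat) (x : 'I_n -> nat -> R) (v : 'I_n -> R)
  (k : R) (s : nat -> option 'I_n) (alpha : 'I_n -> option nat)
  (sigma : seq 'I_n) (istar : 'I_n) (a : nat) :
  (* LP solution x_i(t), i,t in [n] *)
  (forall i t, (1 <= t <= n)%N -> 0 <= x i t) ->
  (forall t, (1 <= t <= n)%N -> \sum_(i < n) x i t <= 1) ->
  (* scenario v, parameter k <= 4 *)
  (forall i, 0 <= v i) -> 0 <= k -> k <= 4 ->
  (* Discrete-Time Poisson Rounding: at step tau only boxes with positive
     sampling probability xbar_i(ceil(tau/2)) can be sampled *)
  (forall tau i, (1 <= tau)%N -> s tau = Some i -> 0 < xbar x i (ceil_half tau)) ->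
  (forall i, first_sample s i (alpha i)) ->
  (* sigma : the boxes in ascending order of alpha *)
  perm_eq sigma (enum 'I_n) ->
  sorted (fun i j => ale (alpha i) (alpha j)) sigma ->
  (* istar = argmin_i (alpha_i + k v_i) *)
  alpha istar = Some a ->
  (forall j b, alpha j = Some b -> a%:R + k * v istar <= b%:R + k * v j) ->
  kDA_objective alpha sigma v k <= a%:R + (k + 1) * v istar.
Proof.
move=> _ _ v_ge0 k_ge0 _ _ first_alpha sigma_perm sigma_sorted ai argmin.
have [t st [a_le_t t_le]] := stop_time_argmin v_ge0 k_ge0 istar a ai argmin.
have istar_sigma : istar \in sigma by rewrite (perm_mem sigma_perm) mem_enum.
have index_lt_a : (index istar sigma < a)%N.
  apply: sorted_label_index_lt sigma_sorted _ _ istar_sigma ai.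
  - by rewrite (perm_uniq sigma_perm) enum_uniq.
  - move=> j l b aj al; move: (first_alpha j) (first_alpha l).
    by rewrite aj al; apply: first_sample_inj.
  - by move=> j b aj; move: (first_alpha j); rewrite aj; apply: first_sample_pos.
have index_lt_n : (index istar sigma < n)%N.
  by rewrite -[X in (_ < X)%N](size_enum_ord n) -(perm_size sigma_perm) index_mem.
have istar_opened : istar \in take (minn t n) sigma.
  by rewrite in_take // leq_min (leq_trans index_lt_a a_le_t).
rewrite /kDA_objective /num_opened st mulrDl mul1r addrA lerD ?seq_min_vol_le //.
by rewrite (le_trans _ t_le) // ler_nat geq_minl.
Qed.
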